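(* For $\boldsymbol\theta\in\boldsymbol\Theta$ and $i\in\mathcal S,a\in\mathcal A$ define $$D_{i,a}(\boldsymbol\theta)=\pi^{\boldsymbol\theta}(i)\Big\{\sum_{j\in\mathcal S}p^a(i,j)g^{\boldsymbol\theta}(j)+r(i,a)-\beta r(i,a)^2+2\beta J^{\boldsymbol\theta}_\mu r(i,a)\Big\}.$$ Then $D_{i,a}(\boldsymbol\theta)$ is the derivative of the combined metric with respect to $\theta_{i,a}$, in the sense that for every $\boldsymbol\theta'\in\boldsymbol\Theta$, $$\frac{\mathrm d}{\mathrm dt}J^{\boldsymbol\theta+t(\boldsymbol\theta'-\boldsymbol\theta)}_{\mu,\sigma}\Big|_{t=0^+}=\sum_{i\in\mathcal S}\sum_{a\in\mathcal A}(\theta'_{i,a}-\theta_{i,a})\,D_{i,a}(\boldsymbol\theta).$$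
   Context: Let $\mathcal S=\{1,\dots,S\}$ be a finite state space and $\mathcal A$ a finite action set, with transition probabilities $p^a(i,j)\ge0$ ($\sum_j p^a(i,j)=1$) and rewards $r(i,a)\in\mathbb R$. Standing assumption: for every deterministic map $d:\mathcal S\to\mathcal A$, the matrix with entries $p^{d(i)}(i,j)$ is irreducible. The randomized policy space is $\boldsymbol\Theta=\{\boldsymbol\theta=(\theta_{i,a}):\theta_{i,a}\ge0,\ \sum_a\theta_{i,a}=1\ \forall i\}$ ($\theta_{i,a}$ = probability of action $a$ in state $i$); it is convex. Under $\boldsymbol\theta$ the transition matrix is $P^{\boldsymbol\theta}(i,j)=\sum_a p^a(i,j)\theta_{i,a}$; it is irreducible with unique stationary distribution $\boldsymbol\pi^{\boldsymbol\theta}$ having positive entries. The mean is $J^{\boldsymbol\theta}_\mu=\sum_i\pi^{\boldsymbol\theta}(i)\sum_a\theta_{i,a}r(i,a)$; for fixed $\beta>0$, $f^{\boldsymbol\theta}(i)=\sum_a\theta_{i,a}[r(i,a)-\beta(r(i,a)-J^{\boldsymbol\theta}_\mu)^2]$ and $J^{\boldsymbol\theta}_{\mu,\sigma}=\sum_i\pi^{\boldsymbol\theta}(i)f^{\boldsymbol\theta}(i)$. The potential $\mathbf g^{\boldsymbol\theta}$ is any solution of $\mathbf g^{\boldsymbol\theta}=\mathbf f^{\boldsymbol\theta}-J^{\boldsymbol\theta}_{\mu,\sigma}\mathbf 1+P^{\boldsymbol\theta}\mathbf g^{\boldsymbol\theta}$ (the right-hand side of the claimed formula does not depend on the choice). 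*)

From HB Require Import structures.
From mathcomp Require Import all_boot all_order all_algebra.
From mathcomp Require Import all_classical all_reals all_analysis.
Set Implicit Arguments. Unset Strict Implicit. Unset Printing Implicit Defensive.
Import Order.TTheory GRing.Theory Num.Theory.
Local Open Scope ring_scope.
Local Open Scope classical_set_scope.

Section MDP.
Variables (R : realType) (S A : finType).

Fixpoint mpow (P : S -> S -> R) (n : nat) : S -> S -> R :=
  match n with
  | O => fun i j => (i == j)%:R
  | n'.+1 => fun i j => \sum_(k : S) mpow P n' i k * P k j
  end.

Definition irreducible (P : S -> S -> R) : Prop :=
  forall i j : S, exists n : nat, 0 < mpow P n i j.

Definition is_policy (th : S -> A -> R) : Prop :=
  (forall i a, 0 <= th i a) /\ (forall i, \sum_(a : A) th i a = 1).

Definition Pth (p : S -> A -> S -> R) (th : S -> A -> R) : S -> S -> R :=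
  fun i j => \sum_(a : A) p i a j * th i a.

Definition is_stationary (P : S -> S -> R) (pi : S -> R) : Prop :=
  (forall i, 0 <= pi i) /\ \sum_(i : S) pi i = 1 /\
  (forall j, pi j = \sum_(i : S) pi i * P i j).

(* "the" stationary distribution (unique under irreducibility), by choice *)
Definition stat_dist (P : S -> S -> R) : {ffun S -> R} :=
  xget 0 [set pi : {ffun S -> R} | is_stationary P pi].

Definition pith p th : S -> R := fun i => stat_dist (Pth p th) i.

Definition Jmu p (r : S -> A -> R) th : R :=
  \sum_(i : S) pith p th i * \sum_(a : A) th i a * r i a.

Definition fth p r (beta : R) th : S -> R := fun i =>
  \sum_(a : A) th i a * (r i a - beta * (r i a - Jmu p r th) ^+ 2).

Definition Jmusig p r beta th : R :=
  \sum_(i : S) pith p th i * fth p r beta th i.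

Definition is_potential p r beta th (g : S -> R) : Prop :=
  forall i, g i = fth p r beta th i - Jmusig p r beta th
                  + \sum_(j : S) Pth p th i j * g j.

Definition Dder p r beta th (g : S -> R) (i : S) (a : A) : R :=
  pith p th i * (\sum_(j : S) p i a j * g j + r i a - beta * r i a ^+ 2
                 + 2 * beta * Jmu p r th * r i a).

End MDP.

(* Write J for Jmu at theta and rho := r - beta (r - J)^2 for the reward
   "frozen" at theta.  Two exact identities reduce the theorem to estimates:
   - mean-variance decomposition: Jmusig at theta' is the average reward of
     rho under theta' plus beta (J' - J)^2, where J' is Jmu at theta';
   - performance-difference formula: if g is a potential of rho under theta,
     the change of average reward from theta to theta' is the average under
     pi^theta' of the advantage sum_a (theta' - theta) (rho + p g).
   Along theta_t = theta + t (theta' - theta) the difference quotient is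
   therefore sum_i pi^theta_t(i) adv(i) + beta (J_t - J)^2 / t, which is
   within O(t) of sum_i pi^theta(i) adv(i) = sum_(i,a) (theta' - theta) D,
   because pi^theta and Jmu are Lipschitz in the policy.  The Lipschitz bound
   is the quantitative form of uniqueness of the stationary law: for an
   irreducible chain the fundamental matrix 1 - P + 1 pi is invertible. *)

From HB Require Import structures.
From mathcomp Require Import all_boot all_order all_algebra.
From mathcomp Require Import all_classical all_reals all_analysis.
From mathcomp Require Import ring lra.
Import Order.TTheory GRing.Theory Num.Theory.
Local Open Scope ring_scope.
Local Open Scope classical_set_scope.

Section FiniteSums.
Context {R : realType}.

Lemma sum_affine {I : finType} (w x y : I -> R) (c e : R) :
  \sum_k w k = 1 ->
  \sum_k w k * (x k + c * y k + e) = \sum_k w k * x k + c * \sum_k w k * y k + e.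
Proof.
move=> w1; rewrite -[e in RHS]mul1r -w1 mulr_sumr mulr_suml -!big_split /=.
by apply: eq_bigr => k _; ring.
Qed.

Lemma ler_sum_term {I : finType} (F : I -> R) (i0 : I) :
  (forall i, 0 <= F i) -> F i0 <= \sum_i F i.
Proof.
by move=> F0; rewrite (bigD1 i0) //= lerDl sumr_ge0.
Qed.

Lemma sum_mul_delta {I : finType} (x : I -> R) (j : I) :
  \sum_i x i * (i == j)%:R = x j.
Proof.
rewrite (bigD1 j) //= eqxx mulr1 big1 ?addr0 // => i /negbTE ->.
by rewrite mulr0.
Qed.

End FiniteSums.

Section StochasticKernels.
Context {R : realType} {S : finType}.
Implicit Types (P Q : S -> S -> R) (x : S -> R).

Lemma mpow_ge0 {P} n i j : (forall i j, 0 <= P i j) -> 0 <= mpow P n i j.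
Proof.
move=> P0; elim: n i j => [|n IHn] i j /=; first by rewrite ler0n.
by apply: sumr_ge0 => k _; apply: mulr_ge0.
Qed.

Lemma mpow_invariant {P x} n :
  (forall j, x j = \sum_i x i * P i j) ->
  forall j, x j = \sum_i x i * mpow P n i j.
Proof.
move=> xP; elim: n => [|n IHn] j /=; first by rewrite sum_mul_delta.
under eq_bigr do rewrite mulr_sumr.
rewrite exchange_big /= xP; apply: eq_bigr => k _.
by rewrite IHn mulr_suml; apply: eq_bigr => i _; rewrite mulrA.
Qed.

Lemma mpow_gt0_mono {P Q n} :
  (forall i j, 0 <= P i j) -> (forall i j, 0 <= Q i j) ->
  (forall i j, 0 < Q i j -> 0 < P i j) ->
  forall i j, 0 < mpow Q n i j -> 0 < mpow P n i j.
Proof.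
move=> P0 Q0 QP; elim: n => [|n IHn] i j //= Qn_gt0.
have [k Qk_gt0] : exists k, 0 < mpow Q n i k * Q k j.
  apply/not_existsP => Qk_le0; move: Qn_gt0; rewrite ltNge => /negP; apply.
  by apply: sumr_le0 => k _; rewrite leNgt; apply/negP => /(Qk_le0 k).
have Qn_k : 0 < mpow Q n i k.
  by rewrite lt0r mpow_ge0 // andbT; apply: contraTneq Qk_gt0 => ->; rewrite mul0r ltxx.
have Q_kj : 0 < Q k j.
  by rewrite lt0r Q0 andbT; apply: contraTneq Qk_gt0 => ->; rewrite mulr0 ltxx.
have Pnk_ge0 l : 0 <= mpow P n i l * P l j by rewrite mulr_ge0 ?mpow_ge0.
apply: (lt_le_trans _ (ler_sum_term _ k Pnk_ge0)).
by rewrite mulr_gt0 ?IHn ?QP.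
Qed.

(* Under irreducibility, a nonnegative invariant vector vanishing at one
   state vanishes everywhere: every state feeds mass into that state. *)
Lemma invariant_ge0_eq0 {P x j0} :
  (forall i j, 0 <= P i j) -> irreducible P ->
  (forall i, 0 <= x i) -> (forall j, x j = \sum_i x i * P i j) ->
  x j0 = 0 -> forall i, x i = 0.
Proof.
move=> P0 P_irr x0 xP xj0 i.
have [n Pn_gt0] := P_irr i j0.
have xPn_ge0 k : 0 <= x k * mpow P n k j0 by rewrite mulr_ge0 ?mpow_ge0.
have := ler_sum_term _ i xPn_ge0.
rewrite -mpow_invariant // xj0 pmulr_lle0 // => xi_le0.
by apply/eqP; rewrite eq_le xi_le0 x0.
Qed.

Lemma stationary_gt0 {P pi} :
  (forall i j, 0 <= P i j) -> irreducible P -> is_stationary P pi ->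
  forall j, 0 < pi j.
Proof.
move=> P0 P_irr [pi0 [pi1 piP]] j.
rewrite lt0r pi0 andbT; apply/eqP => pij0.
have pi_eq0 := invariant_ge0_eq0 P0 P_irr pi0 piP pij0.
by move: pi1; rewrite big1 // => /eqP; rewrite eq_sym oner_eq0.
Qed.

(* Subtracting the largest multiple of pi
   below x leaves a nonnegative invariant vector with a zero entry. *)
Lemma invariant_stationary_multiple {P pi x} :
  (forall i j, 0 <= P i j) -> irreducible P -> is_stationary P pi ->
  (forall j, x j = \sum_i x i * P i j) ->
  forall j, x j = (\sum_i x i) * pi j.
Proof.
move=> P0 P_irr pi_stat xP j.
have pi_gt0 := stationary_gt0 P0 P_irr pi_stat.
have [pi0 [pi1 piP]] := pi_stat.
case: (@arg_minP _ _ S j xpredT (fun i => x i / pi i) erefl) => i0 _ i0_min.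
set c := x i0 / pi i0.
have y0 i : 0 <= x i - c * pi i by rewrite subr_ge0 -ler_pdivlMr // i0_min.
have yP k : x k - c * pi k = \sum_i (x i - c * pi i) * P i k.
  under eq_bigr do rewrite mulrBl.
  rewrite sumrB -xP [in LHS]piP mulr_sumr.
  by congr (_ - _); apply: eq_bigr => i _; rewrite mulrA.
have yi0 : x i0 - c * pi i0 = 0 by rewrite /c divfK ?subrr // gt_eqF.
have x_eq i : x i = c * pi i.
  by apply/eqP; rewrite -subr_eq0 (invariant_ge0_eq0 P0 P_irr y0 yP yi0).
by under eq_bigr do rewrite x_eq; rewrite x_eq -mulr_sumr pi1 mulr1.
Qed.

Definition vec_of x : 'rV[R]_#|S| := \row_k x (enum_val k).
Definition mx_of P : 'M[R]_#|S| := \matrix_(k, l) P (enum_val k) (enum_val l).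

Lemma sum_enum_val (F : S -> R) : \sum_(k < #|S|) F (enum_val k) = \sum_s F s.
Proof. by rewrite -big_enum_val. Qed.

Lemma vec_ofE x s : vec_of x 0 (enum_rank s) = x s.
Proof. by rewrite mxE enum_rankK. Qed.

Lemma vec_of_fun (v : 'rV[R]_#|S|) : v = vec_of (fun s => v 0 (enum_rank s)).
Proof. by apply/rowP => k; rewrite mxE enum_valK. Qed.

Lemma vec_of_mulmx x P :
  vec_of x *m mx_of P = vec_of (fun j => \sum_i x i * P i j).
Proof.
apply/rowP => k; rewrite !mxE -sum_enum_val.
by apply: eq_bigr => l _; rewrite !mxE.
Qed.

(* A stochastic kernel on a nonempty state space has a nonzero invariant
   vector: 1 - P kills the constant column, hence is singular. *)
Lemma stochastic_invariant_exists {P} (s0 : S) :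
  (forall i, \sum_j P i j = 1) ->
  exists x, (exists j, x j != 0) /\ forall j, x j = \sum_i x i * P i j.
Proof.
move=> P1.
have singular : \det (1%:M - mx_of P) == 0.
  rewrite -det_tr; apply/det0P; exists (const_mx 1).
    by apply/eqP => /rowP /(_ (enum_rank s0)); rewrite !mxE; apply/eqP/oner_neq0.
  apply/rowP => k; rewrite !mxE.
  under eq_bigr do rewrite !mxE mul1r.
  rewrite sumrB.
  have -> : \sum_l ((k == l)%:R : R) = 1.
    rewrite (eq_bigr (fun l => 1 * (l == k)%:R)) ?sum_mul_delta // => l _.
    by rewrite mul1r eq_sym.
  by rewrite (sum_enum_val (P (enum_val k))) P1 subrr.
have [v v_neq0 v_ker] := det0P singular.
pose x s := v 0 (enum_rank s).
have vx : v = vec_of x := vec_of_fun v.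
exists x; split.
  have [k vk_neq0] : exists k, v 0 k != 0.
    apply/existsP; apply: contraNT v_neq0 => /existsPn v0.
    by apply/eqP/rowP => k; rewrite mxE; apply/eqP/negbNE/v0.
  by exists (enum_val k); rewrite /x enum_valK.
move=> j; move: v_ker; rewrite mulmxBr mulmx1 => /eqP; rewrite subr_eq0 => /eqP.
rewrite vx vec_of_mulmx => /(congr1 (fun w : 'rV[R]_#|S| => w 0 (enum_rank j))).
by rewrite !vec_ofE.
Qed.

Lemma stochastic_mass {P} x : (forall i, \sum_j P i j = 1) ->
  \sum_j \sum_i x i * P i j = \sum_i x i.
Proof.
by move=> P1; rewrite exchange_big; apply: eq_bigr => i _; rewrite -mulr_sumr P1 mulr1.
Qed.

(* For a stochastic kernel the entrywise absolute value of an invariant vector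
   is again invariant: |x| <= |x|P entrywise and both sides have equal mass. *)
Lemma invariant_norm {P x} :
  (forall i j, 0 <= P i j) -> (forall i, \sum_j P i j = 1) ->
  (forall j, x j = \sum_i x i * P i j) ->
  forall j, `|x j| = \sum_i `|x i| * P i j.
Proof.
move=> P0 P1 xP.
have norm_le j : `|x j| <= \sum_i `|x i| * P i j.
  rewrite [X in `|X|]xP; apply: le_trans (ler_norm_sum _ _ _) _.
  by apply: ler_sum => i _; rewrite normrM (ger0_norm (P0 i j)).
have mass : \sum_j (\sum_i `|x i| * P i j - `|x j|) = 0.
  by rewrite sumrB stochastic_mass // subrr.
move=> j; apply/eqP; rewrite eq_sym -subr_eq0; apply/eqP.
by apply: (psumr_eq0P _ mass) => // k _; rewrite subr_ge0.
Qed.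

(* Every stochastic kernel on a nonempty finite state space has a
   stationary distribution: normalize |x| for a nonzero invariant x. *)
Lemma stationary_exists {P} (s0 : S) :
  (forall i j, 0 <= P i j) -> (forall i, \sum_j P i j = 1) ->
  exists pi, is_stationary P pi.
Proof.
move=> P0 P1.
have [x [[j0 xj0_neq0] xP]] := stochastic_invariant_exists s0 P1.
have xnP := invariant_norm P0 P1 xP.
pose mass := \sum_j `|x j|.
have mass_gt0 : 0 < mass.
  by apply: lt_le_trans (ler_sum_term _ j0 _); rewrite ?normr_gt0.
exists (fun j => `|x j| / mass); split; [|split].
- by move=> i; rewrite divr_ge0 // ltW.
- by rewrite -mulr_suml divff // gt_eqF.
- by move=> j; rewrite xnP mulr_suml; apply: eq_bigr => i _; rewrite mulrAC.
Qed.

Lemma row_le_mulmx_unit {n} {N : 'M[R]_n} : N \in unitmx ->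
  exists C, forall (v : 'rV[R]_n) k, `|v 0 k| <= C * \sum_l `|(v *m N) 0 l|.
Proof.
move=> N_unit; pose C := \sum_i \sum_j `|invmx N i j|.
have entry_le i j : `|invmx N i j| <= C.
  apply: le_trans (ler_sum_term (fun j => `|invmx N i j|) j _) _ => //.
  by apply: (ler_sum_term (fun i => \sum_j `|invmx N i j|) i) => i'; rewrite sumr_ge0.
exists C => v k.
rewrite -{1}(mulmxK N_unit v) mxE mulr_sumr.
apply: le_trans (ler_norm_sum _ _ _) _; apply: ler_sum => l _.
by rewrite normrM mulrC ler_wpM2r.
Qed.

Definition fundamental_mx P (pi : S -> R) : 'M[R]_#|S| :=
  1%:M - mx_of P + mx_of (fun _ j => pi j).

Lemma vec_of_fundamental P pi x :
  vec_of x *m fundamental_mx P pi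
  = vec_of (fun j => x j - \sum_i x i * P i j + (\sum_i x i) * pi j).
Proof.
rewrite mulmxDr mulmxBr mulmx1 !vec_of_mulmx; apply/rowP => k.
by rewrite !mxE mulr_suml.
Qed.

(* For an irreducible chain the fundamental matrix is invertible: a vector in
   its kernel has zero mass, hence is invariant, hence a zero-mass multiple
   of pi. *)
Lemma fundamental_unit {P pi} :
  (forall i j, 0 <= P i j) -> (forall i, \sum_j P i j = 1) -> irreducible P ->
  is_stationary P pi -> fundamental_mx P pi \in unitmx.
Proof.
move=> P0 P1 P_irr pi_stat; have [_ [pi1 _]] := pi_stat.
rewrite unitmxE unitfE; apply/negP => /det0P [v v_neq0].
pose x s := v 0 (enum_rank s).
have vx : v = vec_of x := vec_of_fun v.
rewrite vx vec_of_fundamental => v_ker.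
have ker j : x j - \sum_i x i * P i j + (\sum_i x i) * pi j = 0.
  by move/(congr1 (fun w : 'rV[R]_#|S| => w 0 (enum_rank j))): v_ker; rewrite vec_ofE mxE.
have mass0 : \sum_i x i = 0.
  transitivity (\sum_j (x j - \sum_i x i * P i j + (\sum_i x i) * pi j)).
    by rewrite big_split sumrB /= stochastic_mass // subrr add0r -mulr_sumr pi1 mulr1.
  exact: big1.
have xP j : x j = \sum_i x i * P i j.
  by apply/eqP; rewrite -subr_eq0; have := ker j; rewrite mass0 mul0r addr0 => ->.
move/eqP: v_neq0; apply; apply/rowP => k.
rewrite vx mxE (invariant_stationary_multiple P0 P_irr pi_stat xP) mass0 mul0r.
by rewrite mxE.
Qed.

Lemma stationary_stability {P pi} :
  (forall i j, 0 <= P i j) -> (forall i, \sum_j P i j = 1) -> irreducible P ->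
  is_stationary P pi ->
  exists C, forall u, \sum_i u i = 0 ->
    forall j, `|u j| <= C * \sum_i `|u i - \sum_k u k * P k i|.
Proof.
move=> P0 P1 P_irr pi_stat.
have [C C_bound] := row_le_mulmx_unit (fundamental_unit P0 P1 P_irr pi_stat).
exists C => u u0 j; have := C_bound (vec_of u) (enum_rank j).
rewrite vec_ofE vec_of_fundamental u0.
under eq_bigr do rewrite mxE mul0r addr0.
by rewrite (sum_enum_val (fun i => `|u i - \sum_k u k * P k i|)).
Qed.

Lemma stationary_le1 {P pi} : is_stationary P pi -> forall j, pi j <= 1.
Proof. by case=> pi0 [pi1 _] j; rewrite -pi1 (ler_sum_term _ j pi0). Qed.

Lemma stationary_flow {P pi} Q (g : S -> R) : is_stationary P pi ->
  \sum_i pi i * \sum_j Q i j * g j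
  = \sum_j pi j * g j - \sum_i pi i * \sum_j (P i j - Q i j) * g j.
Proof.
case=> _ [_ piP].
have flow : \sum_i pi i * \sum_j P i j * g j = \sum_j pi j * g j.
  under eq_bigr do rewrite mulr_sumr; rewrite exchange_big /=.
  apply: eq_bigr => j _; rewrite [in RHS]piP mulr_suml.
  by apply: eq_bigr => i _; rewrite mulrA.
have split_diff : \sum_i pi i * \sum_j (P i j - Q i j) * g j
    = \sum_i pi i * \sum_j P i j * g j - \sum_i pi i * \sum_j Q i j * g j.
  rewrite -sumrB; apply: eq_bigr => i _; rewrite -mulrBr -sumrB.
  by congr (_ * _); apply: eq_bigr => j _; rewrite mulrBl.
by rewrite split_diff flow opprB addrC subrK.
Qed.

End StochasticKernels.

Lemma lin_bound_cvg {R : realType} (f : R -> R) (L K : R) :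
  (forall t, 0 < t <= 1 -> `|f t - L| <= K * t) -> f @ 0^'+ --> (L : R^o).
Proof.
move=> f_bound; apply/cvgrPdist_le => e e_gt0.
have K1_gt0 : 0 < `|K| + 1 by rewrite ltr_pwDr // normr_ge0.
near=> t.
have t_gt0 : 0 < t by near: t; exact: nbhs_right_gt.
have t_lt1 : t < 1 by near: t; apply: nbhs_right_lt; exact: ltr01.
have t_small : t < e / (`|K| + 1).
  by near: t; apply: nbhs_right_lt; rewrite divr_gt0.
rewrite ltr_pdivlMr // in t_small.
rewrite distrC; apply: le_trans (f_bound t _) _; first by rewrite t_gt0 ltW.
have := ler_norm K; nra.
Unshelve. all: end_near.
Qed.

Section Policies.
Context {R : realType} {S A : finType}.
Variable p : S -> A -> S -> R.
Hypothesis p_ge0 : forall i a j, 0 <= p i a j.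
Hypothesis p_sum1 : forall i a, \sum_(j : S) p i a j = 1.
Hypothesis p_irr : forall d : S -> A, irreducible (fun i j => p i (d i) j).
(* A state: stationary laws exist only on a nonempty state space. *)
Variable s0 : S.
Implicit Types th : S -> A -> R.

Lemma Pth_ge0 {th} : is_policy th -> forall i j, 0 <= Pth p th i j.
Proof. by case=> th0 _ i j; apply: sumr_ge0 => a _; rewrite mulr_ge0. Qed.

Lemma Pth_sum1 {th} : is_policy th -> forall i, \sum_j Pth p th i j = 1.
Proof.
case=> _ th1 i; rewrite /Pth exchange_big /= -(th1 i).
by apply: eq_bigr => a _; rewrite -mulr_suml p_sum1 mul1r.
Qed.

(* Choosing in each state an action of positive weight gives a deterministic
   policy d with P^theta positive wherever the irreducible P^d is. *)
Lemma Pth_irreducible {th} : is_policy th -> irreducible (Pth p th).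
Proof.
move=> th_pol; have [th0 th1] := th_pol.
have th_supp i : exists a, 0 < th i a.
  apply/not_existsP => th_le0.
  have : \sum_a th i a <= 0.
    by apply: sumr_le0 => a _; rewrite leNgt; apply/negP => /(th_le0 a).
  by rewrite th1 ler10.
have [d th_d_gt0] := choice th_supp.
move=> i j; have [n pd_gt0] := p_irr d i j; exists n.
apply: (mpow_gt0_mono (Pth_ge0 th_pol) _ _ i j pd_gt0) => [k l|k l pkl_gt0].
  exact: p_ge0.
have summand_ge0 a : 0 <= p k a l * th k a by rewrite mulr_ge0.
apply: lt_le_trans (ler_sum_term _ (d k) summand_ge0).
by rewrite mulr_gt0.
Qed.

Lemma policy_segment th th' t :
  is_policy th -> is_policy th' -> 0 <= t <= 1 ->
  is_policy (fun i a => th i a + t * (th' i a - th i a)).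
Proof.
move=> [th0 th1] [th'0 th'1] /andP [t0 t1]; split.
  by move=> i a; have := th0 i a; have := th'0 i a; nra.
by move=> i; rewrite big_split /= -mulr_sumr sumrB th1 th'1 subrr mulr0 addr0.
Qed.

Lemma pith_stationary {th} :
  is_policy th -> is_stationary (Pth p th) (pith p th).
Proof.
move=> th_pol.
have [pi [pi0 [pi1 piP]]] :=
  stationary_exists s0 (Pth_ge0 th_pol) (Pth_sum1 th_pol).
rewrite /pith /stat_dist.
apply: (@xgetPex _ 0 [set pi : {ffun S -> R} | is_stationary (Pth p th) pi]).
exists [ffun i => pi i]; split; [|split].
- by move=> i; rewrite ffunE.
- by under eq_bigr do rewrite ffunE.
- by move=> j; rewrite ffunE piP; apply: eq_bigr => i _; rewrite ffunE.
Qed.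

Lemma policy_le1 {th} : is_policy th -> forall i a, th i a <= 1.
Proof. by case=> th0 th1 i a; rewrite -(th1 i) (ler_sum_term _ a (th0 i)). Qed.

Lemma Pth_sub th th' i j :
  Pth p th' i j - Pth p th i j = \sum_a p i a j * (th' i a - th i a).
Proof. by rewrite -sumrB; apply: eq_bigr => a _; rewrite mulrBr. Qed.

Lemma Pth_row_dist th th' i :
  \sum_j `|Pth p th' i j - Pth p th i j| <= \sum_a `|th' i a - th i a|.
Proof.
under eq_bigr do rewrite Pth_sub.
apply: le_trans (ler_sum _ (fun j _ => ler_norm_sum _ _ _)) _.
rewrite exchange_big /=; apply: ler_sum => a _.
under eq_bigr do rewrite normrM (ger0_norm (p_ge0 _ _ _)).
by rewrite -mulr_suml p_sum1 mul1r.
Qed.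

Definition avg_reward th (rho : S -> A -> R) : R :=
  \sum_i pith p th i * \sum_a th i a * rho i a.

Definition policy_dist th th' : R := \sum_i \sum_a `|th' i a - th i a|.

(* The stationary law is Lipschitz in the policy, for the l1 distance:
   pi' - pi has zero mass and invariance defect pi' (P' - P). *)
Lemma pith_lipschitz {th} : is_policy th ->
  exists K, forall th', is_policy th' ->
    forall j, `|pith p th' j - pith p th j| <= K * policy_dist th th'.
Proof.
move=> th_pol; have pi_stat := pith_stationary th_pol.
have [C C_bound] := stationary_stability (Pth_ge0 th_pol) (Pth_sum1 th_pol)
  (Pth_irreducible th_pol) pi_stat.
exists `|C| => th' th'_pol j.
have pi'_stat := pith_stationary th'_pol.
have [_ [pi1 piP]] := pi_stat; have [pi'0 [pi'1 pi'P]] := pi'_stat.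
pose u k := pith p th' k - pith p th k.
have u0 : \sum_k u k = 0 by rewrite sumrB pi'1 pi1 subrr.
have defect k : u k - \sum_l u l * Pth p th l k
                = \sum_l pith p th' l * (Pth p th' l k - Pth p th l k).
  rewrite /u {1}pi'P {1}piP -!sumrB.
  by apply: eq_bigr => l _; ring.
have defect_le : \sum_k `|u k - \sum_l u l * Pth p th l k| <= policy_dist th th'.
  under eq_bigr do rewrite defect.
  apply: le_trans (ler_sum _ (fun k _ => ler_norm_sum _ _ _)) _.
  rewrite exchange_big /=; apply: ler_sum => l _.
  under eq_bigr do rewrite normrM (ger0_norm (pi'0 l)).
  rewrite -mulr_sumr; apply: le_trans (Pth_row_dist th th' l).
  by rewrite ler_piMl ?sumr_ge0 ?(stationary_le1 pi'_stat).
apply: le_trans (C_bound u u0 j) _.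
apply: le_trans (ler_wpM2r (sumr_ge0 _ (fun _ _ => normr_ge0 _)) (ler_norm C)) _.
by rewrite ler_wpM2l.
Qed.

Lemma avg_reward_lipschitz {th} rho : is_policy th ->
  exists K, forall th', is_policy th' ->
    `|avg_reward th' rho - avg_reward th rho| <= K * policy_dist th th'.
Proof.
move=> th_pol; have [Kpi Kpi_bound] := pith_lipschitz th_pol.
have [pi0 [_ _]] := pith_stationary th_pol.
have [M row_le] : exists M : R, forall i, \sum_a `|rho i a| <= M :> R.
  exists (\sum_i \sum_a `|rho i a|) => i.
  by apply: (ler_sum_term (fun i => \sum_a `|rho i a|) i) => k; rewrite sumr_ge0.
have entry_le i a : `|rho i a| <= M.
  by apply: le_trans (row_le i); apply: (ler_sum_term (fun a => `|rho i a|) a).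
exists (\sum_(i : S) Kpi * M + M) => th' th'_pol.
have th'_le1 := policy_le1 th'_pol; have [th'0 _] := th'_pol.
have split_diff : avg_reward th' rho - avg_reward th rho
  = \sum_i (pith p th' i - pith p th i) * \sum_a th' i a * rho i a
    + \sum_i pith p th i * \sum_a (th' i a - th i a) * rho i a.
  rewrite /avg_reward -sumrB -big_split; apply: eq_bigr => i _ /=.
  by under [X in _ = _ + _ * X]eq_bigr do rewrite mulrBl; rewrite sumrB; ring.
have new_row i : `|\sum_a th' i a * rho i a| <= M.
  apply: le_trans (ler_norm_sum _ _ _) (le_trans _ (row_le i)).
  by apply: ler_sum => a _; rewrite normrM ger0_norm // ler_piMl.
have diff_row i : `|\sum_a (th' i a - th i a) * rho i a|
                  <= M * \sum_a `|th' i a - th i a|.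
  apply: le_trans (ler_norm_sum _ _ _) _; rewrite mulr_sumr.
  by apply: ler_sum => a _; rewrite normrM mulrC ler_wpM2r.
rewrite split_diff; apply: le_trans (ler_normD _ _) _.
rewrite mulrDl; apply: lerD.
  apply: le_trans (ler_norm_sum _ _ _) _.
  rewrite mulr_suml.
  apply: ler_sum => i _; rewrite normrM mulrAC.
  by apply: ler_pM; rewrite ?normr_ge0 ?Kpi_bound.
apply: le_trans (ler_norm_sum _ _ _) _; rewrite /policy_dist mulr_sumr.
apply: ler_sum => i _; rewrite normrM ger0_norm //.
apply: le_trans (ler_wpM2l (pi0 i) (diff_row i)) _.
rewrite ler_piMl ?(stationary_le1 (pith_stationary th_pol)) //.
by rewrite mulr_ge0 ?sumr_ge0 // (le_trans _ (row_le s0)) ?sumr_ge0.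
Qed.

Lemma performance_difference {th th'} rho (g : S -> R) :
  is_policy th -> is_policy th' ->
  (forall i, g i = \sum_a th i a * rho i a - avg_reward th rho
                   + \sum_j Pth p th i j * g j) ->
  avg_reward th' rho - avg_reward th rho
  = \sum_i pith p th' i *
      \sum_a (th' i a - th i a) * (rho i a + \sum_j p i a j * g j).
Proof.
move=> th_pol th'_pol g_pot.
have pi'_stat := pith_stationary th'_pol; have [_ [pi'1 _]] := pi'_stat.
set Phi := avg_reward th rho.
have new_row i : \sum_a th' i a * rho i a
  = g i - \sum_j Pth p th i j * g j + Phi + \sum_a (th' i a - th i a) * rho i a.
  rewrite {1}g_pot; under [X in _ = _ + X]eq_bigr do rewrite mulrBl.
  by rewrite sumrB -/Phi; ring.
have advantage i : \sum_a (th' i a - th i a) * (rho i a + \sum_j p i a j * g j)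
  = \sum_a (th' i a - th i a) * rho i a
    + \sum_j (Pth p th' i j - Pth p th i j) * g j.
  under eq_bigr do rewrite mulrDr; rewrite big_split /=; congr (_ + _).
  under [RHS]eq_bigr do rewrite Pth_sub mulr_suml.
  rewrite exchange_big /=; apply: eq_bigr => a _; rewrite mulr_sumr.
  by apply: eq_bigr => j _; ring.
rewrite {1}/avg_reward; under eq_bigr do rewrite new_row.
under [RHS]eq_bigr do rewrite advantage mulrDr.
rewrite big_split /=.
have expand : \sum_i pith p th' i * (g i - \sum_j Pth p th i j * g j + Phi
                                    + \sum_a (th' i a - th i a) * rho i a)
  = \sum_i pith p th' i * g i
    - \sum_i pith p th' i * \sum_j Pth p th i j * g j
    + Phi * \sum_i pith p th' i
    + \sum_i pith p th' i * \sum_a (th' i a - th i a) * rho i a.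
  rewrite mulr_sumr -sumrB -!big_split; apply: eq_bigr => i _ /=; ring.
rewrite expand (stationary_flow (Pth p th) g pi'_stat) pi'1; ring.
Qed.

Lemma Jmusig_decomposition r beta th th' : is_policy th' ->
  Jmusig p r beta th'
  = avg_reward th' (fun i a => r i a - beta * (r i a - Jmu p r th) ^+ 2)
    + beta * (Jmu p r th' - Jmu p r th) ^+ 2.
Proof.
move=> th'_pol; have [_ th'1] := th'_pol.
have [_ [pi'1 _]] := pith_stationary th'_pol.
set J := Jmu p r th; set J' := Jmu p r th'.
have shift i a : r i a - beta * (r i a - J') ^+ 2
  = (r i a - beta * (r i a - J) ^+ 2) + 2 * beta * (J' - J) * r i a
    + - beta * (J' ^+ 2 - J ^+ 2) by ring.
rewrite /Jmusig /fth -/J'.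
under eq_bigr do under eq_bigr do rewrite shift.
under eq_bigr do rewrite sum_affine //.
rewrite sum_affine // /avg_reward /J' /Jmu /=; ring.
Qed.

Section MeanVarianceGradient.
Variables (r : S -> A -> R) (beta : R) (th th' : S -> A -> R) (g : S -> R).
Hypotheses (th_pol : is_policy th) (th'_pol : is_policy th').
Hypothesis g_pot : is_potential p r beta th g.

Local Notation tht t := (fun i a => th i a + t * (th' i a - th i a)).
Local Notation J := (Jmu p r th).
Local Notation rho := (fun i a => r i a - beta * (r i a - J) ^+ 2).
Local Notation adv i :=
  (\sum_a (th' i a - th i a) * (rho i a + \sum_j p i a j * g j)).
Local Notation quotient t :=
  ((Jmusig p r beta (tht t) - Jmusig p r beta th) / t).

Lemma segment_policy {t} : 0 < t <= 1 -> is_policy (tht t).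
Proof. by case/andP=> t_gt0 t_le1; apply: policy_segment; rewrite // ltW. Qed.

Lemma segment_dist t : 0 <= t -> policy_dist th (tht t) = t * policy_dist th th'.
Proof.
move=> t_ge0; rewrite /policy_dist mulr_sumr; apply: eq_bigr => i _.
rewrite mulr_sumr; apply: eq_bigr => a _.
by rewrite addrAC subrr add0r normrM (ger0_norm t_ge0).
Qed.

Lemma quotient_identity t : 0 < t <= 1 ->
  quotient t = \sum_i pith p (tht t) i * adv i
               + beta * (Jmu p r (tht t) - J) ^+ 2 / t.
Proof.
move=> t_range; have t_neq0 : t != 0 by case/andP: t_range => t_gt0 _; rewrite gt_eqF.
have Jmusig_th : Jmusig p r beta th = avg_reward th rho by [].
have scaled_adv i : \sum_a (th i a + t * (th' i a - th i a) - th i a)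
                     * (rho i a + \sum_j p i a j * g j) = t * adv i.
  by rewrite mulr_sumr; apply: eq_bigr => a _; ring.
rewrite (Jmusig_decomposition r beta th (tht t) (segment_policy t_range)) Jmusig_th.
rewrite addrAC (performance_difference rho g th_pol (segment_policy t_range) g_pot).
under eq_bigr do rewrite scaled_adv mulrCA.
by rewrite -mulr_sumr; field.
Qed.

(* The gradient of the statement is the pi-average of the advantage: the two
   integrands differ by beta J^2 (th' - th), which sums to zero over actions. *)
Lemma gradient_average :
  \sum_i \sum_a (th' i a - th i a) * Dder p r beta th g i a
  = \sum_i pith p th i * adv i.
Proof.
have [_ th1] := th_pol; have [_ th'1] := th'_pol.
apply: eq_bigr => i _.
have mass0 : \sum_a (th' i a - th i a) = 0 by rewrite sumrB th'1 th1 subrr.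
transitivity (pith p th i * (adv i + beta * J ^+ 2 * \sum_a (th' i a - th i a))).
  rewrite [beta * _ * _]mulr_sumr -big_split /= mulr_sumr.
  by apply: eq_bigr => a _; rewrite /Dder; ring.
by rewrite mass0 mulr0 addr0.
Qed.

Lemma pith_segment_bound : exists K, forall t, 0 < t <= 1 ->
  forall i, `|pith p (tht t) i - pith p th i| <= K * t.
Proof.
have [K K_bound] := pith_lipschitz th_pol.
exists (K * policy_dist th th') => t t_range i.
have t_ge0 : 0 <= t by case/andP: t_range => /ltW.
rewrite -mulrA [policy_dist _ _ * t]mulrC -segment_dist //.
exact: K_bound (segment_policy t_range) i.
Qed.

Lemma Jmu_segment_bound : exists K, forall t, 0 < t <= 1 ->
  `|Jmu p r (tht t) - J| <= K * t.
Proof.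
have [K K_bound] := avg_reward_lipschitz r th_pol.
exists (K * policy_dist th th') => t t_range.
have t_ge0 : 0 <= t by case/andP: t_range => /ltW.
rewrite -mulrA [policy_dist _ _ * t]mulrC -segment_dist //.
exact: K_bound (segment_policy t_range).
Qed.

Lemma advantage_term_bound : exists K, forall t, 0 < t <= 1 ->
  `|\sum_i pith p (tht t) i * adv i - \sum_i pith p th i * adv i| <= K * t.
Proof.
have [K K_bound] := pith_segment_bound.
exists (\sum_i K * `|adv i|) => t t_range.
rewrite -sumrB mulr_suml; apply: le_trans (ler_norm_sum _ _ _) _.
apply: ler_sum => i _; rewrite -mulrBl normrM mulrAC.
by rewrite ler_wpM2r ?K_bound.
Qed.

Lemma variance_term_bound : exists K, forall t, 0 < t <= 1 ->
  `|beta * (Jmu p r (tht t) - J) ^+ 2 / t| <= K * t.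
Proof.
have [K K_bound] := Jmu_segment_bound.
exists (`|beta| * K ^+ 2) => t t_range.
have t_gt0 : 0 < t by case/andP: t_range.
have x_le := K_bound t t_range; have x_ge0 := normr_ge0 (Jmu p r (tht t) - J).
rewrite normrM normfV (gtr0_norm t_gt0) normrM normrX ler_pdivrMr //.
rewrite -!mulrA ler_wpM2l //; nra.
Qed.

Lemma quotient_lin_bound : exists K, forall t, 0 < t <= 1 ->
  `|quotient t - \sum_i pith p th i * adv i| <= K * t.
Proof.
have [K1 K1_bound] := advantage_term_bound.
have [K2 K2_bound] := variance_term_bound.
exists (K1 + K2) => t t_range; rewrite quotient_identity // addrAC mulrDl.
exact: le_trans (ler_normD _ _) (lerD (K1_bound t t_range) (K2_bound t t_range)).
Qed.

End MeanVarianceGradient.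

End Policies.

Theorem lemma3 (R : realType) (S A : finType)
  (p : S -> A -> S -> R) (r : S -> A -> R) (beta : R)
  (hbeta : 0 < beta)
  (hp0 : forall i a j, 0 <= p i a j)
  (hp1 : forall i a, \sum_(j : S) p i a j = 1)
  (hirr : forall d : S -> A, irreducible (fun i j => p i (d i) j))
  (th th' : S -> A -> R) (hth : is_policy th) (hth' : is_policy th')
  (g : S -> R) (hg : is_potential p r beta th g) :
  (fun t : R =>
     (Jmusig p r beta (fun i a => th i a + t * (th' i a - th i a))
      - Jmusig p r beta th) / t) @ 0^'+ -->
  \sum_(i : S) \sum_(a : A) (th' i a - th i a) * Dder p r beta th g i a.
Proof.
case: (pickP (fun _ : S => true)) => [s0 _ | S_empty].
  rewrite (gradient_average p r beta th th' g hth hth').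
  have [K K_bound] := quotient_lin_bound p hp0 hp1 hirr s0 r beta th th' g hth hth' hg.
  exact: lin_bound_cvg K_bound.
have sum0 (F : S -> R) : \sum_i F i = 0 by apply: big1 => i; rewrite S_empty.
apply: (@lin_bound_cvg _ _ _ 0) => t _.
by rewrite /Jmusig !sum0 subrr mul0r subrr normr0 mul0r.
Qed.
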